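(* Let $F$ be a finite simple graph, and for $n\in\mathbb{N}$ let $T^*_n$ be a graphical value of the constraint $T(G)=t(F,h^G)$ on $\mathcal{G}_n$ with Lagrange multiplier $\theta^*_n$. Assume that $\lim_{n\to\infty}T^*_n=T^*_\infty$ and $\lim_{n\to\infty}\theta^*_n=\theta^*_\infty$ exist. Then $$\theta^*_\infty\in\arg\max_{\theta\in\mathbb{R}}\big[\theta T^*_\infty-\psi_\infty(\theta)\big],$$ where $\psi_\infty(\theta):=\lim_{n\to\infty}\psi_n(\theta)=\sup_{\tilde h\in\tilde{\mathcal W}}\big[\theta T(\tilde h)-I(\tilde h)\big]$.
   Context: $\mathcal{G}_n$ is the set of simple undirected graphs on vertex set $\{1,\dots,n\}$. A graphon is a symmetric measurable $h:[0,1]^2\to[0,1]$; $\mathcal W$ is the space of graphons. $\tilde{\mathcal W}$ is the quotient of $\mathcal W$ under $h_1\sim h_2$ iff $\delta_\square(h_1,h_2)=0$, where $\delta_\square(h_1,h_2)=\inf_{\sigma_1,\sigma_2}\sup_{S,T\subset[0,1]}\big|\int_{S\times T}(h_1(\sigma_1x,\sigma_1y)-h_2(\sigma_2x,\sigma_2y))\,dx\,dy\big|$, the infimum being over measure-preserving bijections of $[0,1]$. For $G\in\mathcal{G}_n$ the empirical graphon is $h^G(x,y)=1$ if there is an edge between vertices $\lceil nx\rceil$ and $\lceil ny\rceil$, and $0$ otherwise. For $F$ with vertex set $\{1,\dots,m\}$ and edge set $E(F)$, $t(F,h)=\int_{[0,1]^m}\prod_{\{i,j\}\in E(F)}h(x_i,x_j)\,dx_1\cdots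 dx_m$, and $T(h):=t(F,h)$, $T(G):=t(F,h^G)$. $I(u)=\tfrac12u\log u+\tfrac12(1-u)\log(1-u)$ for $u\in[0,1]$ (with $0\log 0=0$), and $I(h)=\int_{[0,1]^2}I(h(x,y))\,dx\,dy$, which is well defined on $\tilde{\mathcal W}$. A value $T^*_n$ is graphical if $T(G)=T^*_n$ for some $G\in\mathcal G_n$. For $\theta\in\mathbb{R}$, $\psi_n(\theta)=n^{-2}\log\sum_{G\in\mathcal{G}_n}e^{n^2\theta T(G)}$. The canonical ensemble is $\mathrm{P}_{\mathrm{can}}(G)=\exp\big(n^2[\theta^*_nT(G)-\psi_n(\theta^*_n)]\big)$, where the Lagrange multiplier $\theta^*_n$ is the unique real number such that $\sum_G T(G)\mathrm{P}_{\mathrm{can}}(G)=T^*_n$. It is known that the limit $\lim_n\psi_n(\theta)$ exists and equals $\sup_{\tilde h\in\tilde{\mathcal W}}[\theta T(\tilde h)-I(\tilde h)]$. *)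

From HB Require Import structures.
From mathcomp Require Import all_boot all_order all_algebra.
From mathcomp Require Import all_classical all_reals.
From mathcomp Require Import topology normedtype sequences exp.
Unset Printing Implicit Defensive.
Import Order.TTheory GRing.Theory Num.Theory.
Import numFieldNormedType.Exports.
Local Open Scope ring_scope.

(* A simple undirected graph on vertex set 'I_n (= {1,..,n} shifted to
   {0,..,n-1}) is given by its symmetric, loopless set of ordered
   adjacent pairs. *)
Definition simpleb {n : nat} (G : {set 'I_n * 'I_n}) : bool :=
  [forall i, forall j, ((i, j) \in G) == ((j, i) \in G)] &&
  [forall i, (i, i) \notin G].

(* T(G) = t(F, h^G), written out: integrating the step function h^G over
   [0,1]^m gives n^{-m} times the number of maps phi : V(F) -> V(G) sending
   each edge {i,j} of F (counted once, i < j) to an edge of G. *)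
Definition Tdens (R : realType) {m : nat} (EF : {set 'I_m * 'I_m})
    {n : nat} (G : {set 'I_n * 'I_n}) : R :=
  (n%:R ^- m) *
  \sum_(phi : {ffun 'I_m -> 'I_n})
     \prod_(p in EF | (nat_of_ord p.1 < nat_of_ord p.2)%N)
        (((phi p.1, phi p.2) \in G) : nat)%:R.

Definition psi_n (R : realType) {m : nat} (EF : {set 'I_m * 'I_m})
    (n : nat) (theta : R) : R :=
  (n%:R ^+ 2)^-1 *
  ln (\sum_(G : {set 'I_n * 'I_n} | simpleb G)
        expR (n%:R ^+ 2 * theta * Tdens R EF G)).

Definition Pcan (R : realType) {m : nat} (EF : {set 'I_m * 'I_m})
    (n : nat) (theta : R) (G : {set 'I_n * 'I_n}) : R :=
  expR (n%:R ^+ 2 * (theta * Tdens R EF G - psi_n R EF n theta)).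

Definition can_mean (R : realType) {m : nat} (EF : {set 'I_m * 'I_m})
    (n : nat) (theta : R) : R :=
  \sum_(G : {set 'I_n * 'I_n} | simpleb G) Tdens R EF G * Pcan R EF n theta G.

From HB Require Import structures.
From mathcomp Require Import all_boot all_order all_algebra.
From mathcomp Require Import all_classical all_reals.
From mathcomp Require Import topology normedtype sequences exp.
From mathcomp Require Import ring lra.
Import Order.TTheory GRing.Theory Num.Theory.
Import numFieldNormedType.Exports.
Set Implicit Arguments.
Unset Strict Implicit.
Local Open Scope classical_set_scope.
Local Open Scope ring_scope.

(* psi_n(th) = n^-2 ln Z(n^2 th), where Z(s) is the partition function of the
   Gibbs weights exp(s T(G)) on simple graphs. ln Z is convex with slope the
   Gibbs mean (tangent bound from exp x >= 1 + x), and the canonical mean at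
   theta_n is T*_n, so theta_n maximises th T*_n - psi_n(th) exactly. Since
   0 <= T <= 1, psi_n is 1-Lipschitz, so psi_n(theta_n) may be replaced by
   psi_n(theta_oo) at cost |theta_n - theta_oo|, and the inequality passes to
   the limit. *)

Section LogPartition.
Variables (R : realType) (I : finType) (P : pred I) (i0 : I).
Hypothesis P_i0 : P i0.
Variable E : I -> R.

Definition partition (s : R) : R := \sum_(i | P i) expR (s * E i).

Definition gibbs_mean (s : R) : R :=
  (\sum_(i | P i) E i * expR (s * E i)) / partition s.

Lemma partition_gt0 s : 0 < partition s.
Proof.
rewrite /partition (bigD1 i0) //= ltr_pwDl ?expR_gt0 //.
by apply: sumr_ge0 => i _; apply: ltW; apply: expR_gt0.
Qed.

Lemma gibbs_meanK s :
  gibbs_mean s * partition s = \sum_(i | P i) E i * expR (s * E i).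
Proof. by rewrite divfK // gt_eqF ?partition_gt0. Qed.

Lemma ln_partition_tangent s0 s :
  ln (partition s0) + (s - s0) * gibbs_mean s0 <= ln (partition s).
Proof.
set c := (s - s0) * gibbs_mean s0.
have Z0_gt0 := partition_gt0 s0.
suff : partition s0 * expR c <= partition s.
  rewrite -ler_ln ?posrE ?mulr_gt0 ?expR_gt0 ?partition_gt0 //.
  by rewrite lnM ?posrE ?expR_gt0 // expRK.
have expR_tangent i :
    expR (s0 * E i) * (expR c * (1 + ((s - s0) * E i - c))) <= expR (s * E i).
  have -> : expR (s * E i) = expR (s0 * E i) * (expR c * expR ((s - s0) * E i - c)).
    by rewrite -!expRD; congr expR; ring.
  by rewrite !ler_wpM2l ?(ltW (expR_gt0 _)) ?expR_ge1Dx.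
apply: le_trans (ler_sum _ (fun i _ => expR_tangent i)).
rewrite (eq_bigr (fun i => expR c * ((1 - c) * expR (s0 * E i) +
                               (s - s0) * (E i * expR (s0 * E i))))); last first.
  by move=> i _; ring.
rewrite -mulr_sumr big_split /= -!mulr_sumr -gibbs_meanK -/(partition s0).
by rewrite [leRHS](_ : _ = partition s0 * expR c) // /c; ring.
Qed.

Lemma gibbs_mean_norm_le b s :
  (forall i, P i -> `|E i| <= b) -> `|gibbs_mean s| <= b.
Proof.
move=> Eb; have Z_gt0 := partition_gt0 s.
rewrite /gibbs_mean normrM normfV (gtr0_norm Z_gt0) ler_pdivrMr //.
apply: le_trans (ler_norm_sum _ _ _) _.
rewrite /partition mulr_sumr; apply: ler_sum => i Pi.
by rewrite normrM (gtr0_norm (expR_gt0 _)) ler_wpM2r ?(ltW (expR_gt0 _)) ?Eb.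
Qed.

Lemma ln_partition_lipschitz b s s' :
  (forall i, P i -> `|E i| <= b) ->
  `|ln (partition s) - ln (partition s')| <= b * `|s - s'|.
Proof.
move=> Eb.
have slope_le u : `|(s - s') * gibbs_mean u| <= b * `|s - s'|.
  by rewrite normrM mulrC ler_wpM2r ?gibbs_mean_norm_le.
have := ln_partition_tangent s s'; have := ln_partition_tangent s' s.
have := slope_le s; have := slope_le s'.
rewrite !ler_norml; lra.
Qed.

End LogPartition.

Section GraphPartition.
Variables (R : realType) (m : nat) (EF : {set 'I_m * 'I_m}).

Lemma simpleb_set0 n : simpleb (finset.set0 : {set 'I_n * 'I_n}).
Proof.
apply/andP; split; last by apply/forallP => i; rewrite inE.
by apply/forallP => i; apply/forallP => j; rewrite !inE.
Qed.

Lemma Tdens_ge0 n (G : {set 'I_n * 'I_n}) : 0 <= Tdens R EF G.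
Proof.
apply: mulr_ge0; first by rewrite invr_ge0 exprn_ge0 ?ler0n.
by apply: sumr_ge0 => phi _; apply: prodr_ge0 => p _; apply: ler0n.
Qed.

Lemma Tdens_le1 n (G : {set 'I_n * 'I_n}) : (0 < n)%N -> Tdens R EF G <= 1.
Proof.
move=> n_gt0; have nm_gt0 : 0 < n%:R ^+ m :> R by rewrite exprn_gt0 ?ltr0n.
rewrite /Tdens ler_pdivrMl // mulr1.
have -> : n%:R ^+ m = \sum_(phi : {ffun 'I_m -> 'I_n}) 1 :> R.
  by rewrite sumr_const card_ffun !card_ord natrX.
apply: ler_sum => phi _; apply: prodr_ile1 => p _.
by case: (_ \in G); rewrite ?ler01 ?lexx.
Qed.

Lemma Tdens_norm_le1 n (G : {set 'I_n * 'I_n}) : (0 < n)%N -> `|Tdens R EF G| <= 1.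
Proof. by move=> n_gt0; rewrite ger0_norm ?Tdens_ge0 ?Tdens_le1. Qed.

Local Notation Z n := (partition (@simpleb n) (Tdens R EF)).
Local Notation mean n := (gibbs_mean (@simpleb n) (Tdens R EF)).

Lemma psi_nE n th : psi_n R EF n th = (n%:R ^+ 2)^-1 * ln (Z n (n%:R ^+ 2 * th)).
Proof. by []. Qed.

Lemma can_meanE n th : (0 < n)%N -> can_mean R EF n th = mean n (n%:R ^+ 2 * th).
Proof.
move=> n_gt0; rewrite /can_mean /gibbs_mean mulr_suml; apply: eq_bigr => G _.
have n2_neq0 : n%:R ^+ 2 != 0 :> R by rewrite expf_neq0 // pnatr_eq0 -lt0n.
rewrite /Pcan psi_nE mulrBr !mulrA mulfV // mul1r expRD expRN.
by rewrite lnK ?posrE ?(partition_gt0 (simpleb_set0 n)) // mulrA.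
Qed.

Lemma psi_n_tangent n th0 th : (0 < n)%N ->
  psi_n R EF n th0 + (th - th0) * can_mean R EF n th0 <= psi_n R EF n th.
Proof.
move=> n_gt0; have n2_gt0 : 0 < n%:R ^+ 2 :> R by rewrite exprn_gt0 ?ltr0n.
rewrite can_meanE // !psi_nE.
set a := n%:R ^+ 2; set mu := mean n (a * th0).
have -> : a^-1 * ln (Z n (a * th0)) + (th - th0) * mu
        = a^-1 * (ln (Z n (a * th0)) + (a * th - a * th0) * mu).
  by field; rewrite gt_eqF.
rewrite ler_wpM2l ?invr_ge0 ?(ltW n2_gt0) //; exact: (ln_partition_tangent (simpleb_set0 n)).
Qed.

Lemma psi_n_lipschitz n th th' : (0 < n)%N ->
  `|psi_n R EF n th - psi_n R EF n th'| <= `|th - th'|.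
Proof.
move=> n_gt0; have n2_gt0 : 0 < n%:R ^+ 2 :> R by rewrite exprn_gt0 ?ltr0n.
have ln_Z_lipschitz := ln_partition_lipschitz (simpleb_set0 n)
  (n%:R ^+ 2 * th) (n%:R ^+ 2 * th') (fun G _ => Tdens_norm_le1 G n_gt0).
rewrite mul1r -mulrBr normrM (gtr0_norm n2_gt0) in ln_Z_lipschitz.
by rewrite !psi_nE -mulrBr normrM gtr0_norm ?invr_gt0 // ler_pdivrMl.
Qed.

Lemma can_mean_argmax n th0 th : (0 < n)%N ->
  th * can_mean R EF n th0 - psi_n R EF n th
  <= th0 * can_mean R EF n th0 - psi_n R EF n th0.
Proof. by move=> n_gt0; have := psi_n_tangent th0 th n_gt0; lra. Qed.

End GraphPartition.

Theorem lemma1p4 (R : realType) (m : nat) (EF : {set 'I_m * 'I_m})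
    (Tstar theta : nat -> R) (Tinf thinf : R) (psiinf : R -> R) :
  simpleb EF ->
  (exists N : nat, forall n : nat, (N <= n)%N ->
     (exists G : {set 'I_n * 'I_n}, simpleb G /\ Tdens R EF G = Tstar n) /\
     can_mean R EF n (theta n) = Tstar n /\
     (forall th : R, can_mean R EF n th = Tstar n -> th = theta n)) ->
  Tstar n @[n --> \oo] --> Tinf ->
  theta n @[n --> \oo] --> thinf ->
  (forall th : R, psi_n R EF n th @[n --> \oo] --> psiinf th) ->
  forall th : R, th * Tinf - psiinf th <= thinf * Tinf - psiinf thinf.
Proof.
move=> _ [N multiplier] Tstar_cvg theta_cvg psi_cvg th.
have lhs_cvg : th * Tstar n - psi_n R EF n th @[n --> \oo] --> th * Tinf - psiinf th.
  by apply: cvgB => //; apply: cvgM => //; exact: cvg_cst.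
have rhs_cvg : theta n * Tstar n - psi_n R EF n thinf + `|theta n - thinf|
    @[n --> \oo] --> thinf * Tinf - psiinf thinf.
  have dist_cvg : `|theta n - thinf| @[n --> \oo] --> `|thinf - thinf|.
    by apply: cvg_norm; apply: cvgB => //; exact: cvg_cst.
  rewrite subrr normr0 in dist_cvg.
  by rewrite -[X in _ --> X]addr0; apply: cvgD => //; apply: cvgB => //; apply: cvgM.
apply: (ler_cvg_to lhs_cvg rhs_cvg); exists (maxn N 1) => // n /=.
rewrite geq_max => /andP[/multiplier[_ [mean_n _]] n_gt0].
have := can_mean_argmax EF (theta n) th n_gt0; rewrite mean_n.
have := psi_n_lipschitz EF (theta n) thinf n_gt0.
rewrite ler_norml; lra.
Qed.
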